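(* Let $N\ge 1$ and let $T:M(N)\to M(N)$ be a non-zero linear map, and let $T^*$ be its adjoint with respect to the Hilbert–Schmidt inner product $\langle A,B\rangle_{\mathrm{HS}}=\operatorname{tr}(A^*B)$. Then $h(T)=h(T^* )$.
   Context: $M(N)$ is the space of $N\times N$ complex matrices. For $1\le p<\infty$, $\|A\|_p$ is the Schatten-$p$ norm $(\sum_i\sigma_i(A)^p)^{1/p}$ and $\|A\|_\infty$ is the operator norm; $\|T\|_{p\to p}=\sup_{X\ne0}\|T(X)\|_p/\|X\|_p$. The height of a non-zero linear map $T:M(N)\to M(N)$ is $h(T)=\sqrt{\|T\|_{1\to1}\|T\|_{\infty\to\infty}}/\|T\|_{2\to2}$. *)

From HB Require Import structures.
From mathcomp Require Import all_boot all_order all_algebra.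
From mathcomp Require Import complex.
From mathcomp Require Import boolp classical_sets reals.
Set Implicit Arguments. Unset Strict Implicit. Unset Printing Implicit Defensive.
Import Order.TTheory GRing.Theory Num.Theory.
Local Open Scope ring_scope.
Local Open Scope complex_scope.

Section Schatten.
Variables (R : realType) (N : nat).
Local Notation C := R[i].

Definition adjmx (A : 'M[C]_N) : 'M[C]_N := (map_mx Num.conj A)^T.

Definition unitarymx (U : 'M[C]_N) : Prop := U *m adjmx U = 1%:M.

Definition singvals (A : 'M[C]_N) (s : 'rV[R]_N) : Prop :=
  (forall i, 0 <= s 0 i) /\
  exists U V : 'M[C]_N, [/\ unitarymx U, unitarymx V &
     A = U *m diag_mx (map_mx (fun r : R => r%:C) s) *m V].

(* the value of f on the singular values of A (well defined: the multiset
   of singular values is unique, f below are symmetric) *)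
Definition of_singvals (f : 'rV[R]_N -> R) (A : 'M[C]_N) : R :=
  sup [set f s | s in singvals A].

Definition schatten1 (A : 'M[C]_N) : R :=
  of_singvals (fun s => \sum_(i < N) s 0 i) A.
Definition schatten2 (A : 'M[C]_N) : R :=
  of_singvals (fun s => Num.sqrt (\sum_(i < N) s 0 i ^+ 2)) A.
Definition schattenInf (A : 'M[C]_N) : R :=
  of_singvals (fun s => \big[Num.max/0]_(i < N) s 0 i) A.

Definition opnorm (nrm : 'M[C]_N -> R) (T : 'M[C]_N -> 'M[C]_N) : R :=
  sup [set nrm (T X) / nrm X | X in [set X : 'M[C]_N | X != 0]].

Definition height (T : 'M[C]_N -> 'M[C]_N) : R :=
  Num.sqrt (opnorm schatten1 T * opnorm schattenInf T) / opnorm schatten2 T.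

Definition hs (A B : 'M[C]_N) : C := \tr (adjmx A *m B).

Definition hs_adjoint (T Ts : 'M[C]_N -> 'M[C]_N) : Prop :=
  forall A B, hs A (T B) = hs (Ts A) B.

End Schatten.

(* Hoelder's inequality [|<A, B>| <= |A|_1 |B|_oo] for the Hilbert-Schmidt
   pairing is attained in each argument, so the Schatten-1 and Schatten-oo
   norms are dual to each other, while the Schatten-2 norm is self-dual
   (Cauchy-Schwarz).  Moving [T] across the pairing therefore gives
   [|T|_{1->1} = |T^*|_{oo->oo}], [|T|_{oo->oo} = |T^*|_{1->1}] and
   [|T|_{2->2} = |T^*|_{2->2}], so the two heights coincide.
   Since the Schatten norms are defined through an arbitrary singular value
   decomposition, the same duality first shows that they do not depend on the
   decomposition, and decompositions are shown to exist: diagonalise [A^* A]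
   by a unitary [P]; then [A P^*] has orthogonal columns and equals
   [U diag(s)] once its normalised nonzero columns are completed to a
   unitary [U]. *)

From Pilot Require Import Defs.
From HB Require Import structures.
From mathcomp Require Import all_boot all_order all_algebra.
From mathcomp Require Import complex.
From mathcomp Require Import boolp classical_sets reals.
From mathcomp Require Import ring.
Import Order.TTheory GRing.Theory Num.Theory.
Set Implicit Arguments. Unset Strict Implicit.
Local Open Scope ring_scope.
Local Open Scope sesquilinear_scope.
Local Open Scope classical_set_scope.

Section SingularValues.
Variables (R : realType) (N : nat).
Local Notation C := R[i].
Local Notation M := 'M[C]_N.
Local Notation "x %:C" := (real_complex _ x) : ring_scope.

Lemma adjmxE (A : M) : adjmx A = A ^t*.
Proof. by rewrite /adjmx map_trmx. Qed.

Lemma adjmx_entry (A : M) i j : adjmx A i j = (A j i)^*.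
Proof. by rewrite !mxE. Qed.

Lemma adjmxK (A : M) : adjmx (adjmx A) = A.
Proof. by rewrite !adjmxE trmxCK. Qed.

Lemma adjmxM (A B : M) : adjmx (A *m B) = adjmx B *m adjmx A.
Proof. by rewrite !adjmxE trmx_mul map_mxM. Qed.

Lemma mxtrace_adjmx (A : M) : \tr (adjmx A) = (\tr A)^*.
Proof. by rewrite /mxtrace rmorph_sum; apply: eq_bigr => i _; rewrite adjmx_entry. Qed.

Lemma hsC (A B : M) : hs B A = (hs A B)^*.
Proof. by rewrite /hs -mxtrace_adjmx adjmxM adjmxK. Qed.

Lemma unitarymxE (U : M) : Defs.unitarymx U <-> U \is unitarymx.
Proof. by rewrite /Defs.unitarymx adjmxE; split => /unitarymxP. Qed.

Lemma adjmx_unitary (U : M) : (adjmx U \is unitarymx) = (U \is unitarymx).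
Proof. by rewrite adjmxE trmxC_unitary. Qed.

Lemma mulmx_adjmx_unitary (U : M) : U \is unitarymx -> U *m adjmx U = 1%:M.
Proof. by rewrite adjmxE => /unitarymxP. Qed.

Lemma adjmx_mul_unitary (U : M) : U \is unitarymx -> adjmx U *m U = 1%:M.
Proof. by rewrite -adjmx_unitary => /mulmx_adjmx_unitary; rewrite adjmxK. Qed.

Lemma unitarymx_row_norm (U : M) i :
  U \is unitarymx -> \sum_k `|U i k| ^+ 2 = 1.
Proof.
move=> /unitarymxP/matrixP/(_ i i); rewrite !mxE eqxx mulr1n => <-.
by apply: eq_bigr => k _; rewrite !mxE normCK.
Qed.

Lemma unitarymx_col_norm (U : M) i :
  U \is unitarymx -> \sum_k `|U k i| ^+ 2 = 1.
Proof.
rewrite -trmx_unitary => /(unitarymx_row_norm i) <-.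
by apply: eq_bigr => k _; rewrite mxE.
Qed.

(** * Hoelder's inequality for singular value decompositions *)

Definition realdiag_mx (s : 'rV[R]_N) : M :=
  diag_mx (map_mx (fun r : R => r%:C) s).

Lemma adjmx_realdiag s : adjmx (realdiag_mx s) = realdiag_mx s.
Proof.
apply/matrixP => i j; rewrite !mxE eq_sym.
by case: eqP => [->|_]; rewrite ?mulr1n ?mulr0n ?conjC0 //; exact: conjc_real.
Qed.

Definition sv_sum (s : 'rV[R]_N) : R := \sum_(i < N) s 0 i.
Definition sv_max (s : 'rV[R]_N) : R := \big[Num.max/0]_(i < N) s 0 i.

Lemma sv_max_ge0 s : 0 <= sv_max s.
Proof.
by rewrite /sv_max; elim/big_rec: _ => // i x _ x_ge0; rewrite le_max x_ge0 orbT.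
Qed.

Lemma sum_norm_unitary_le1 (Q P : M) i :
  Q \is unitarymx -> P \is unitarymx -> \sum_k `|Q i k| * `|P k i| <= 1.
Proof.
move=> uQ uP; apply: le_trans (_ : \sum_k (`|Q i k| ^+ 2 + `|P k i| ^+ 2) / 2 <= 1).
  apply: ler_sum => k _.
  exact: (real_leif_mean_square (normr_real _) (normr_real _)).1.
rewrite -mulr_suml big_split /= unitarymx_row_norm ?unitarymx_col_norm //.
by rewrite -mulr2n divff ?pnatr_eq0.
Qed.

Lemma trace_holder (Q P : M) (s t : 'rV[R]_N) :
  Q \is unitarymx -> P \is unitarymx ->
  (forall i, 0 <= s 0 i) -> (forall i, 0 <= t 0 i) ->
  `|\tr (realdiag_mx s *m Q *m realdiag_mx t *m P)| <= (sv_sum s * sv_max t)%:C.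
Proof.
move=> uQ uP s_ge0 t_ge0; rewrite rmorphM /mxtrace rmorph_sum mulr_suml.
apply: le_trans (ler_norm_sum _ _ _) _; apply: ler_sum => i _.
rewrite mxE; apply: le_trans (ler_norm_sum _ _ _) _.
apply: le_trans (_ : \sum_k (s 0 i * sv_max t)%:C * (`|Q i k| * `|P k i|) <= _).
  apply: ler_sum => k _; rewrite mul_mx_diag mul_diag_mx !mxE !normrM.
  rewrite [`|(s 0 i)%:C|]ger0_norm ?[`|(t 0 k)%:C|]ger0_norm ?ler0c // rmorphM.
  have -> : (s 0 i)%:C * `|Q i k| * (t 0 k)%:C * `|P k i|
          = (s 0 i)%:C * (`|Q i k| * `|P k i|) * (t 0 k)%:C by ring.
  rewrite [X in _ <= X]mulrAC ler_wpM2l ?mulr_ge0 ?normr_ge0 ?ler0c // lecR.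
  exact: le_bigmax.
rewrite -mulr_sumr rmorphM ler_piMr ?mulr_ge0 ?ler0c ?sv_max_ge0 //.
exact: sum_norm_unitary_le1.
Qed.

Lemma hs_svdE (U1 V1 U2 V2 : M) (r s : 'rV[R]_N) :
  hs (U1 *m realdiag_mx r *m V1) (U2 *m realdiag_mx s *m V2)
  = \tr (realdiag_mx r *m (adjmx U1 *m U2) *m realdiag_mx s *m (V2 *m adjmx V1)).
Proof.
by rewrite /hs !adjmxM adjmx_realdiag -!mulmxA [LHS]mxtrace_mulC !mulmxA.
Qed.

Lemma hs_svd_le_sum_max (Y Z : M) (s t : 'rV[R]_N) :
  singvals Y s -> singvals Z t ->
  `|hs Y Z| <= (sv_sum s * sv_max t)%:C.
Proof.
case=> s_ge0 [U1 [V1 [/unitarymxE uU1 /unitarymxE uV1 ->]]].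
case=> t_ge0 [U2 [V2 [/unitarymxE uU2 /unitarymxE uV2 ->]]].
rewrite -adjmx_unitary in uU1; rewrite -adjmx_unitary in uV1; rewrite hs_svdE.
exact: (trace_holder (mul_unitarymx uU1 uU2) (mul_unitarymx uV2 uV1) s_ge0 t_ge0).
Qed.

Lemma hs_svd_le_max_sum (Y Z : M) (s t : 'rV[R]_N) :
  singvals Y s -> singvals Z t ->
  `|hs Y Z| <= (sv_max s * sv_sum t)%:C.
Proof. by move=> Ys Zt; rewrite hsC norm_conjC mulrC hs_svd_le_sum_max. Qed.

Lemma hs_common_svd (U V : M) (r s : 'rV[R]_N) :
  U \is unitarymx -> V \is unitarymx ->
  hs (U *m realdiag_mx r *m V) (U *m realdiag_mx s *m V)
  = (\sum_i r 0 i * s 0 i)%:C.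
Proof.
move=> uU uV; rewrite hs_svdE (adjmx_mul_unitary uU) (mulmx_adjmx_unitary uV) !mulmx1.
rewrite /mxtrace rmorph_sum; apply: eq_bigr => i _.
by rewrite mul_diag_mx !mxE eqxx !mulr1n rmorphM.
Qed.

Lemma singvals_unitary_diag (U V : M) (r : 'rV[R]_N) :
  U \is unitarymx -> V \is unitarymx ->
  (forall i, 0 <= r 0 i) -> singvals (U *m realdiag_mx r *m V) r.
Proof.
move=> uU uV r_ge0; split; first exact: r_ge0.
by exists U, V; split; [exact/unitarymxE | exact/unitarymxE |].
Qed.

Lemma singvals_ge0 (A : M) (s : 'rV[R]_N) : singvals A s -> forall i, 0 <= s 0 i.
Proof. by case. Qed.

Lemma sum_delta_mul (x : 'I_N -> R) i :
  \sum_j (delta_mx 0 i : 'rV[R]_N) 0 j * x j = x i.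
Proof.
rewrite (bigD1 i) //= big1 => [|j /negPf ji]; rewrite mxE ?ji ?eqxx ?mul0r //.
by rewrite mul1r addr0.
Qed.

Lemma sv_sum_delta i : sv_sum (delta_mx 0 i) = 1.
Proof.
by rewrite /sv_sum; under eq_bigr do rewrite -[_ 0 _]mulr1; rewrite sum_delta_mul.
Qed.

Lemma sv_max_const1_le : sv_max (const_mx 1) <= 1.
Proof. by apply: bigmax_le => [|i _]; [exact: ler01 | rewrite mxE]. Qed.

Lemma singvals_unitary_const1 (U V : M) : U \is unitarymx -> V \is unitarymx ->
  singvals (U *m realdiag_mx (const_mx 1) *m V) (const_mx 1).
Proof. by move=> uU uV; apply: singvals_unitary_diag uU uV _ => i; rewrite mxE ler01. Qed.

Lemma singvals_unitary_delta (U V : M) i : U \is unitarymx -> V \is unitarymx ->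
  singvals (U *m realdiag_mx (delta_mx 0 i) *m V) (delta_mx 0 i).
Proof. by move=> uU uV; apply: singvals_unitary_diag uU uV _ => j; rewrite mxE ler0n. Qed.

Lemma hs_common_svd_const1 (U V : M) s : U \is unitarymx -> V \is unitarymx ->
  hs (U *m realdiag_mx (const_mx 1) *m V) (U *m realdiag_mx s *m V) = (sv_sum s)%:C.
Proof.
by move=> uU uV; rewrite (hs_common_svd _ _ uU uV); under eq_bigr do rewrite mxE mul1r.
Qed.

Lemma hs_common_svd_delta (U V : M) s i : U \is unitarymx -> V \is unitarymx ->
  hs (U *m realdiag_mx (delta_mx 0 i) *m V) (U *m realdiag_mx s *m V) = (s 0 i)%:C.
Proof. by move=> uU uV; rewrite (hs_common_svd _ _ uU uV) sum_delta_mul. Qed.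

(* Pairing [A] with [U V], resp. [U E_ii V], built from one decomposition
   [A = U diag(t) V] gives [sv_sum t], resp. [t_i], which Hoelder's inequality
   bounds through any other decomposition. *)
Lemma singvals_sum_le (A : M) (s t : 'rV[R]_N) :
  singvals A s -> singvals A t -> sv_sum t <= sv_sum s.
Proof.
move=> As [t_ge0 [U [V [/unitarymxE uU /unitarymxE uV eA]]]].
have := hs_svd_le_max_sum (singvals_unitary_const1 uU uV) As.
rewrite eA (hs_common_svd_const1 _ uU uV) ger0_norm ?ler0c ?sumr_ge0 // lecR => /le_trans.
apply; rewrite ler_piMl ?sv_max_const1_le //.
by apply: sumr_ge0 => i _; exact: singvals_ge0 As i.
Qed.

Lemma singvals_max_le (A : M) (s t : 'rV[R]_N) :
  singvals A s -> singvals A t -> sv_max t <= sv_max s.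
Proof.
move=> As [t_ge0 [U [V [/unitarymxE uU /unitarymxE uV eA]]]].
apply: bigmax_le => [|i _]; first exact: sv_max_ge0.
have := hs_svd_le_sum_max (singvals_unitary_delta i uU uV) As.
by rewrite eA (hs_common_svd_delta _ _ uU uV) ger0_norm ?ler0c // lecR sv_sum_delta mul1r.
Qed.

Lemma hs_self_singvals (A : M) (s : 'rV[R]_N) :
  singvals A s -> hs A A = (\sum_i s 0 i ^+ 2)%:C.
Proof.
case=> _ [U [V [/unitarymxE uU /unitarymxE uV ->]]].
by rewrite (hs_common_svd _ _ uU uV); under eq_bigr do rewrite -expr2.
Qed.

(** * Existence of singular value decompositions *)

Lemma hermitian_unitary_diag (H : M) : adjmx H = H ->
  exists Q d, Q \is unitarymx /\ Q *m H *m adjmx Q = diag_mx d.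
Proof.
move=> hH; have /orthomx_spectralP eH : H \is normalmx.
  by apply/normalmxP; rewrite -adjmxE hH.
set Q := spectralmx H in eH; have uQ : Q \is unitarymx := spectral_unitarymx H.
exists Q, (spectral_diag H); split; first exact: uQ.
rewrite [in LHS]eH (invmx_unitary uQ) -adjmxE !mulmxA (mulmx_adjmx_unitary uQ) mul1mx.
by rewrite -mulmxA (mulmx_adjmx_unitary uQ) mulmx1.
Qed.

Lemma unitary_conj_mul (X Y Q : M) : Q \is unitarymx ->
  (Q *m X *m adjmx Q) *m (Q *m Y *m adjmx Q) = Q *m (X *m Y) *m adjmx Q.
Proof.
by move=> uQ; rewrite -!mulmxA (mulmxA (adjmx Q)) (adjmx_mul_unitary uQ) mul1mx.
Qed.

Lemma adjmx_mul_self_ii (B : M) i : (adjmx B *m B) i i = \sum_k `|B k i| ^+ 2.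
Proof. by rewrite mxE; apply: eq_bigr => k _; rewrite adjmx_entry normCKC. Qed.

Lemma col_eq0_of_adjmx_mul (B : M) i :
  (adjmx B *m B) i i = 0 -> forall k, B k i = 0.
Proof.
rewrite adjmx_mul_self_ii => B0 k; apply/eqP; rewrite -normr_eq0 -sqrf_eq0.
by apply/eqP; apply: (psumr_eq0P _ B0) => // j _; exact: exprn_ge0.
Qed.

Lemma row_eq0_of_mul_adjmx (B : M) j :
  (B *m adjmx B) j j = 0 -> forall k, B j k = 0.
Proof.
move=> BB0 k; have := @col_eq0_of_adjmx_mul (adjmx B) j.
rewrite adjmxK => /(_ BB0 k); rewrite adjmx_entry => /eqP.
by rewrite conjC_eq0 => /eqP.
Qed.

Lemma adjmx_mul_colE (A B A' B' : M) i j i' j' :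
  (forall k, A k i = A' k i') -> (forall k, B k j = B' k j') ->
  (adjmx A *m B) i j = (adjmx A' *m B') i' j'.
Proof.
by move=> eA eB; rewrite !mxE; apply: eq_bigr => k _; rewrite !adjmx_entry eA eB.
Qed.

Lemma sum_natr_bool (I : finType) (P : pred I) : \sum_i (P i)%:R = #|P|%:R :> C.
Proof.
rewrite -natr_sum -sum1_card; congr _%:R; rewrite [RHS]big_mkcond /=.
by apply: eq_bigr => i _; rewrite unfold_in; case: (P i).
Qed.

Lemma exists_inj_in (T : finType) (A B : {pred T}) : (#|A| <= #|B|)%N ->
  exists2 f : T -> T, {in A, forall x, f x \in B} & {in A &, injective f}.
Proof.
move=> leAB; pose f x := nth x (enum B) (index x (enum A)).
have ltB x : x \in A -> (index x (enum A) < size (enum B))%N.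
  by move=> Ax; rewrite -cardE (leq_trans _ leAB) // cardE index_mem mem_enum.
exists f => [x Ax | x y Ax Ay]; first by rewrite -mem_enum mem_nth ?ltB.
rewrite /f (set_nth_default x y) ?ltB // => /eqP.
rewrite nth_uniq ?enum_uniq ?ltB // => /eqP /(congr1 (nth x (enum A))).
by rewrite !nth_index ?mem_enum.
Qed.

Section UnitaryCompletion.
Variables (G : M) (b : 'I_N -> bool).
Hypothesis gramG : adjmx G *m G = diag_mx (\row_i (b i)%:R).

Lemma completion_col_eq0 i : ~~ b i -> forall k, G k i = 0.
Proof.
move=> nbi; apply: col_eq0_of_adjmx_mul.
by rewrite gramG !mxE eqxx mulr1n (negPf nbi).
Qed.

Lemma range_proj_idem : G *m adjmx G *m (G *m adjmx G) = G *m adjmx G.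
Proof.
rewrite mulmxA -(mulmxA G) gramG; congr (_ *m _).
apply/matrixP => k i; rewrite mul_mx_diag !mxE.
by case: (boolP (b i)) => [_|/completion_col_eq0 ->]; rewrite ?mulr1 ?mul0r.
Qed.

Lemma range_proj_diag : exists Q (e : 'I_N -> bool), [/\ Q \is unitarymx,
  Q *m (G *m adjmx G) *m adjmx Q = diag_mx (\row_j (e j)%:R) & #|e| = #|b|].
Proof.
have [|Q [c [uQ hQ]]] := @hermitian_unitary_diag (G *m adjmx G).
  by rewrite adjmxM adjmxK.
have P2 := range_proj_idem; set P := G *m adjmx G in P2 hQ *.
have c01 j : c 0 j = (c 0 j == 1)%:R.
  have := unitary_conj_mul P P uQ; rewrite P2 hQ mul_diag_mx => /matrixP/(_ j j).
  rewrite !mxE eqxx mulr1n => /eqP; rewrite -subr_eq0 -{3}(mulr1 (c 0 j)) -mulrBr.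
  by rewrite mulf_eq0 subr_eq0 => /orP[] /eqP ->; rewrite ?eqxx // eq_sym oner_eq0.
exists Q, (fun j => c 0 j == 1); split; first exact: uQ.
  by rewrite hQ; congr diag_mx; apply/rowP => j; rewrite !mxE -c01.
apply/eqP; rewrite -(eqr_nat C) -!sum_natr_bool.
under eq_bigr do rewrite -c01.
rewrite -mxtrace_diag -hQ mxtrace_mulC mulmxA (adjmx_mul_unitary uQ) mul1mx.
rewrite /P mxtrace_mulC gramG mxtrace_diag.
by apply/eqP; apply: eq_bigr => i _; rewrite mxE.
Qed.

Lemma unitary_completion :
  exists2 U : M, U \is unitarymx & forall i, b i -> forall k, U k i = G k i.
Proof.
have [Q [e [uQ hQ card_e]]] := range_proj_diag.
have QG0 j : ~~ e j -> forall i, (Q *m G) j i = 0.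
  move=> nej; apply: row_eq0_of_mul_adjmx.
  by rewrite adjmxM !mulmxA -(mulmxA _ G) hQ !mxE eqxx mulr1n (negPf nej).
have [f f_e f_inj] : exists2 f : 'I_N -> 'I_N,
    {in [pred i | ~~ b i], forall i, ~~ e (f i)} & {in [pred i | ~~ b i] &, injective f}.
  apply: (@exists_inj_in _ [pred i | ~~ b i] [pred j | ~~ e j]).
  by rewrite -(leq_add2l #|b|) cardC -card_e cardC.
(* The columns of [adjmx Q] indexed by [~~ e] are an orthonormal basis of the
   orthogonal complement of the range of [G]; [f] assigns one of them to each
   column of [G] outside [b]. *)
pose U := \matrix_(k, i) if b i then G k i else adjmx Q k (f i).
have U_b i : b i -> forall k, U k i = G k i by move=> bi k; rewrite mxE bi.
have U_nb i : ~~ b i -> forall k, U k i = adjmx Q k (f i).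
  by move=> /negPf nbi k; rewrite mxE nbi.
have neq i i' : ~~ b i -> b i' -> (i == i') = false.
  by move=> nbi bi'; apply: contraNF nbi => /eqP ->.
exists U; last exact: U_b.
rewrite -adjmx_unitary -unitarymxE /Defs.unitarymx adjmxK.
apply/matrixP => i i'; rewrite [RHS]mxE.
case: (boolP (b i)) => bi; case: (boolP (b i')) => bi'.
- by rewrite (adjmx_mul_colE (U_b _ bi) (U_b _ bi')) gramG !mxE bi.
- rewrite (adjmx_mul_colE (U_b _ bi) (U_nb _ bi')) -adjmxM adjmx_entry.
  by rewrite (QG0 _ (f_e _ bi')) conjC0 eq_sym neq.
- rewrite (adjmx_mul_colE (U_nb _ bi) (U_b _ bi')) adjmxK.
  by rewrite (QG0 _ (f_e _ bi)) neq.
- rewrite (adjmx_mul_colE (U_nb _ bi) (U_nb _ bi')) adjmxK.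
  by rewrite (mulmx_adjmx_unitary uQ) mxE (inj_in_eq f_inj).
Qed.

End UnitaryCompletion.

Lemma exists_sqrt_row (d : 'rV[C]_N) : (forall i, 0 <= d 0 i) ->
  exists s : 'rV[R]_N, (forall i, 0 <= s 0 i) /\ forall i, (s 0 i)%:C ^+ 2 = d 0 i.
Proof.
move=> d_ge0; exists (\row_i Num.sqrt (complex.Re (d 0 i))).
split=> i; rewrite mxE ?sqrtr_ge0 //.
have dR : (complex.Re (d 0 i))%:C = d 0 i := RRe_real (ger0_real (d_ge0 i)).
have Re_ge0 : 0 <= complex.Re (d 0 i) by rewrite -ler0c dR.
by rewrite -rmorphXn sqr_sqrtr.
Qed.

Lemma svd_orthogonal_cols (B : M) (d : 'rV[C]_N) : adjmx B *m B = diag_mx d ->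
  exists (s : 'rV[R]_N) (U : M),
    [/\ forall i, 0 <= s 0 i, U \is unitarymx & B = U *m realdiag_mx s].
Proof.
move=> gramB; have [i|s [s_ge0 s2]] := @exists_sqrt_row d.
  have := adjmx_mul_self_ii B i; rewrite gramB mxE eqxx mulr1n => ->.
  by apply: sumr_ge0 => k _; rewrite exprn_ge0.
pose b i := s 0 i != 0.
(* As [0^-1 = 0], [G] keeps the zero columns of [B] and normalises the others. *)
pose G := B *m realdiag_mx (\row_i (s 0 i)^-1).
have gramG : adjmx G *m G = diag_mx (\row_i (b i)%:R).
  rewrite /G adjmxM adjmx_realdiag -mulmxA (mulmxA (adjmx B)) gramB.
  apply/matrixP => i j; rewrite mul_diag_mx mul_mx_diag !mxE.
  case: eqP => [<-|_]; last by rewrite !mulr0n mul0r mulr0.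
  rewrite !mulr1n -s2 -!rmorphXn -!rmorphM /b; case: eqP => [->|/eqP si].
    by rewrite invr0 !mul0r.
  by rewrite expr2 mulfK // mulVf // rmorph1.
have [U uU UG] := unitary_completion gramG.
exists s, U; split; [exact: s_ge0 | exact: uU |].
apply/matrixP => k i; rewrite mul_mx_diag !mxE.
have [si|si] := eqVneq (s 0 i) 0.
  rewrite si mulr0; apply: col_eq0_of_adjmx_mul.
  by rewrite gramB mxE eqxx mulr1n -s2 si expr0n.
rewrite UG // /G mul_mx_diag !mxE -mulrA -rmorphM mulVf //.
by rewrite mulr1.
Qed.

Lemma singvals_exist (A : M) : exists s, singvals A s.
Proof.
have [|P [d [uP hP]]] := @hermitian_unitary_diag (adjmx A *m A).
  by rewrite adjmxM adjmxK.
have [|s [U [s_ge0 uU eB]]] := @svd_orthogonal_cols (A *m adjmx P) d.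
  by rewrite -hP adjmxM adjmxK !mulmxA.
exists s; rewrite (_ : A = U *m realdiag_mx s *m P).
  exact: (singvals_unitary_diag uU uP s_ge0).
by rewrite -eB -mulmxA (adjmx_mul_unitary uP) mulmx1.
Qed.

(** * Schatten norms *)

Lemma of_singvals_eq (f : 'rV[R]_N -> R) (A : M) s : singvals A s ->
  (forall t, singvals A t -> f t = f s) -> of_singvals f A = f s.
Proof.
move=> As fE; rewrite /of_singvals (_ : [set f t | t in singvals A] = [set f s]).
  exact: sup1.
apply/seteqP; split=> [_ [t At <-] | _ ->] /=; first exact: fE.
by exists s; [exact: As | reflexivity].
Qed.

Lemma schatten1E (A : M) s : singvals A s -> schatten1 A = sv_sum s.
Proof.
move=> As; apply: (@of_singvals_eq sv_sum _ _ As) => t At.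
by apply/eqP; rewrite eq_le (singvals_sum_le As At) (singvals_sum_le At As).
Qed.

Lemma schattenInfE (A : M) s : singvals A s -> schattenInf A = sv_max s.
Proof.
move=> As; apply: (@of_singvals_eq sv_max _ _ As) => t At.
by apply/eqP; rewrite eq_le (singvals_max_le As At) (singvals_max_le At As).
Qed.

Lemma schatten2E (A : M) s : singvals A s ->
  schatten2 A = Num.sqrt (\sum_i s 0 i ^+ 2).
Proof.
move=> As; apply: (of_singvals_eq As) => t At; congr Num.sqrt.
by apply: complexI; rewrite -(hs_self_singvals As) -(hs_self_singvals At).
Qed.

Lemma schatten1_ge0 (A : M) : 0 <= schatten1 A.
Proof.
have [s As] := singvals_exist A; rewrite (schatten1E As).
apply: sumr_ge0 => i _; exact: singvals_ge0 As i.
Qed.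

Lemma schattenInf_ge0 (A : M) : 0 <= schattenInf A.
Proof. by have [s As] := singvals_exist A; rewrite (schattenInfE As) sv_max_ge0. Qed.

Lemma schatten2_ge0 (A : M) : 0 <= schatten2 A.
Proof. by have [s As] := singvals_exist A; rewrite (schatten2E As) sqrtr_ge0. Qed.

Lemma hs_self (A : M) : hs A A = (schatten2 A ^+ 2)%:C.
Proof.
have [s As] := singvals_exist A.
rewrite (schatten2E As) sqr_sqrtr ?(hs_self_singvals As) //.
by apply: sumr_ge0 => i _; rewrite exprn_ge0 ?(singvals_ge0 As).
Qed.

Lemma hs_holder (Y Z : M) : `|hs Y Z| <= (schatten1 Y * schattenInf Z)%:C.
Proof.
have [s Ys] := singvals_exist Y; have [t Zt] := singvals_exist Z.
rewrite (schatten1E Ys) (schattenInfE Zt); exact: hs_svd_le_sum_max.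
Qed.

Lemma hs_holder_inf (Y Z : M) : `|hs Y Z| <= (schattenInf Y * schatten1 Z)%:C.
Proof. by rewrite hsC norm_conjC mulrC hs_holder. Qed.

Lemma hs_dotmx (A B : M) : hs A B = dotmx (mxvec B) (mxvec A).
Proof.
rewrite /hs /mxtrace dotmxE mxE; under eq_bigr => i _ do rewrite mxE.
rewrite exchange_big pair_big (reindex _ (curry_mxvec_bij N N)) /=.
by apply: eq_bigr => -[k i] _; rewrite !mxE !mxvecE mulrC.
Qed.

Lemma hs_cauchy_schwarz (A B : M) : `|hs A B| <= (schatten2 A * schatten2 B)%:C.
Proof.
have norm2E (X : M) : sqrtC (dotmx (mxvec X) (mxvec X)) = (schatten2 X)%:C.
  by rewrite -hs_dotmx hs_self rmorphXn sqrCK ?ler0c ?schatten2_ge0.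
rewrite hs_dotmx; apply: le_trans (CauchySchwarz_sqrt _ _ _).1 _.
rewrite rmorphM mulrC le_eqVlt; apply/orP; left; apply/eqP.
by congr (_ * _); exact: norm2E.
Qed.

Lemma hs_self_eq0 (A : M) : hs A A = 0 -> A = 0.
Proof.
move=> A0; apply/matrixP => k i; rewrite mxE; apply: col_eq0_of_adjmx_mul.
have AA_ge0 j : 0 <= (adjmx A *m A) j j.
  by rewrite adjmx_mul_self_ii sumr_ge0 // => l _; rewrite exprn_ge0.
exact: (psumr_eq0P (fun j _ => AA_ge0 j) A0).
Qed.

Lemma schatten2_gt0 (A : M) : A != 0 -> 0 < schatten2 A.
Proof.
move=> A0; rewrite lt_def schatten2_ge0 andbT; apply: contraNneq A0 => s0.
by apply/eqP/hs_self_eq0; rewrite hs_self s0 expr0n /= raddf0.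
Qed.

Lemma schatten2_sqr_le (A : M) : schatten2 A ^+ 2 <= schatten1 A * schattenInf A.
Proof.
have := hs_holder A A; rewrite hs_self ger0_norm; first by rewrite lecR.
by rewrite ler0c exprn_ge0 ?schatten2_ge0.
Qed.

Lemma schatten1_schattenInf_gt0 (A : M) : A != 0 ->
  0 < schatten1 A /\ 0 < schattenInf A.
Proof.
move=> A0; have := lt_le_trans (exprn_gt0 2 (schatten2_gt0 A0)) (schatten2_sqr_le A).
rewrite !lt_def schatten1_ge0 schattenInf_ge0 !andbT => /andP[+ _].
by rewrite mulf_eq0 negb_or => /andP[-> ->].
Qed.

Section PositiveDimension.
Hypothesis N_gt0 : (0 < N)%N.

Lemma scalar1_neq0 : (1%:M : M) != 0.
Proof.
apply/eqP => /matrixP/(_ (Ordinal N_gt0) (Ordinal N_gt0)).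
by rewrite !mxE eqxx mulr1n; apply/eqP; rewrite oner_eq0.
Qed.

Lemma sv_max_const1 : sv_max (const_mx 1) = 1.
Proof.
apply/le_anti; rewrite sv_max_const1_le /=.
by rewrite (le_trans _ (le_bigmax _ _ (Ordinal N_gt0))) // mxE.
Qed.

Lemma schattenInf_attained (Z : M) :
  exists E, schatten1 E = 1 /\ hs E Z = (schattenInf Z)%:C.
Proof.
have [s Zs] := singvals_exist Z; rewrite (schattenInfE Zs) /sv_max.
have [s_ge0 [U [V [/unitarymxE uU /unitarymxE uV ->]]]] := Zs.
have [i _ ->] := @eq_bigmax _ _ _ 0 (Ordinal N_gt0) xpredT (fun i => s 0 i) isT
  (fun i _ => s_ge0 i).
exists (U *m realdiag_mx (delta_mx 0 i) *m V).
rewrite (schatten1E (singvals_unitary_delta i uU uV)) sv_sum_delta.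
by rewrite (hs_common_svd_delta _ _ uU uV).
Qed.

Lemma schatten1_attained (Z : M) :
  exists W, schattenInf W = 1 /\ hs W Z = (schatten1 Z)%:C.
Proof.
have [s Zs] := singvals_exist Z; rewrite (schatten1E Zs).
have [_ [U [V [/unitarymxE uU /unitarymxE uV ->]]]] := Zs.
exists (U *m realdiag_mx (const_mx 1) *m V).
rewrite (schattenInfE (singvals_unitary_const1 uU uV)) sv_max_const1.
by rewrite (hs_common_svd_const1 _ uU uV).
Qed.

Lemma hs0r (A : M) : hs A 0 = 0.
Proof. by rewrite /hs mulmx0 linear0. Qed.

Lemma schatten1_0 : schatten1 (0 : M) = 0.
Proof. by have [W [_ hW]] := schatten1_attained 0; apply: complexI; rewrite -hW hs0r. Qed.

Lemma schattenInf_0 : schattenInf (0 : M) = 0.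
Proof.
by have [E [_ hE]] := schattenInf_attained 0; apply: complexI; rewrite -hE hs0r.
Qed.

Lemma schatten2_0 : schatten2 (0 : M) = 0.
Proof.
apply/eqP; rewrite -sqrf_eq0 eq_le exprn_ge0 ?schatten2_ge0 // andbT.
by have := schatten2_sqr_le 0; rewrite schatten1_0 mul0r.
Qed.

End PositiveDimension.

End SingularValues.

(** * Operator norms of adjoint maps *)

Lemma sup_eq_ubound (R : realType) (A B : set R) :
  A !=set0 -> B !=set0 -> ubound A = ubound B -> sup A = sup B.
Proof.
move=> /set0P/negPf A0 /set0P/negPf B0 AB.
by rewrite /sup /supremum A0 B0 /supremums AB.
Qed.

Section OperatorNorms.
Variables (R : realType) (N : nat).
Hypothesis N_gt0 : (0 < N)%N.
Local Notation C := R[i].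
Local Notation M := 'M[C]_N.

Definition bounded_by (nrm : M -> R) (T : M -> M) (m : R) :=
  forall X, nrm (T X) <= m * nrm X.

Lemma ubound_opnormE (nrm : M -> R) (T : {linear M -> M}) m :
  nrm 0 = 0 -> (forall X, X != 0 -> 0 < nrm X) ->
  ubound [set nrm (T X) / nrm X | X in [set X : M | X != 0]] m <->
  bounded_by nrm T m.
Proof.
move=> nrm0 nrm_gt0; split=> [ubm X | Tm _ [X X0 <-]].
  have [-> | X0] := eqVneq X 0; first by rewrite linear0 nrm0 mulr0.
  by rewrite -ler_pdivrMr ?nrm_gt0 //; apply: ubm; exists X.
by rewrite ler_pdivrMr ?nrm_gt0 ?Tm.
Qed.

Lemma opnorm_eq (nrm1 nrm2 : M -> R) (T1 T2 : {linear M -> M}) :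
  nrm1 0 = 0 -> (forall X, X != 0 -> 0 < nrm1 X) ->
  nrm2 0 = 0 -> (forall X, X != 0 -> 0 < nrm2 X) ->
  (forall m, bounded_by nrm1 T1 m <-> bounded_by nrm2 T2 m) ->
  opnorm nrm1 T1 = opnorm nrm2 T2.
Proof.
move=> nrm1_0 nrm1_gt0 nrm2_0 nrm2_gt0 T12; apply: sup_eq_ubound.
- by exists (nrm1 (T1 1%:M) / nrm1 1%:M), 1%:M; first exact: scalar1_neq0.
- by exists (nrm2 (T2 1%:M) / nrm2 1%:M), 1%:M; first exact: scalar1_neq0.
apply/seteqP; split=> m /=.
  by move/(ubound_opnormE T1 _ nrm1_0 nrm1_gt0)/T12/(ubound_opnormE T2 _ nrm2_0 nrm2_gt0).
by move/(ubound_opnormE T2 _ nrm2_0 nrm2_gt0)/T12/(ubound_opnormE T1 _ nrm1_0 nrm1_gt0).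
Qed.

Lemma hs_adjoint_sym (T Ts : M -> M) : hs_adjoint T Ts -> hs_adjoint Ts T.
Proof. by move=> adjT A B; rewrite hsC -adjT -hsC. Qed.

Lemma bounded_by_adjoint_1_inf (T Ts : M -> M) m : hs_adjoint T Ts ->
  bounded_by (@schatten1 R N) T m -> bounded_by (@schattenInf R N) Ts m.
Proof.
move=> adjT Tm X; have [E [E1 hE]] := schattenInf_attained N_gt0 (Ts X).
have := hs_holder (T E) X; rewrite -(hs_adjoint_sym adjT) hE ger0_norm; last first.
  by rewrite ler0c schattenInf_ge0.
rewrite lecR => /le_trans; apply; rewrite ler_wpM2r ?schattenInf_ge0 //.
by have := Tm E; rewrite E1 mulr1.
Qed.

Lemma bounded_by_adjoint_inf_1 (T Ts : M -> M) m : hs_adjoint T Ts ->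
  bounded_by (@schattenInf R N) T m -> bounded_by (@schatten1 R N) Ts m.
Proof.
move=> adjT Tm Y; have [W [W1 hW]] := schatten1_attained N_gt0 (Ts Y).
have := hs_holder_inf (T W) Y; rewrite -(hs_adjoint_sym adjT) hW ger0_norm; last first.
  by rewrite ler0c schatten1_ge0.
rewrite lecR => /le_trans; apply; rewrite ler_wpM2r ?schatten1_ge0 //.
by have := Tm W; rewrite W1 mulr1.
Qed.

Lemma bounded_by_adjoint_2 (T Ts : M -> M) m : hs_adjoint T Ts ->
  bounded_by (@schatten2 R N) T m -> bounded_by (@schatten2 R N) Ts m.
Proof.
move=> adjT Tm Y; have m_ge0 : 0 <= m.
  rewrite -(pmulr_lge0 _ (schatten2_gt0 (@scalar1_neq0 R N N_gt0))).
  exact: le_trans (schatten2_ge0 _) (Tm _).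
have : schatten2 (Ts Y) * schatten2 (Ts Y) <= m * schatten2 Y * schatten2 (Ts Y).
  have := hs_cauchy_schwarz (T (Ts Y)) Y.
  rewrite -(hs_adjoint_sym adjT) hs_self ger0_norm; last first.
    by rewrite ler0c exprn_ge0 ?schatten2_ge0.
  rewrite lecR expr2 => /le_trans; apply.
  by rewrite mulrAC ler_wpM2r ?schatten2_ge0 ?Tm.
have := schatten2_ge0 (Ts Y); rewrite le0r => /orP[/eqP-> _ | TsY_gt0].
  by rewrite mulr_ge0 ?schatten2_ge0.
by rewrite ler_pM2r.
Qed.

Lemma opnorm_adjoint_1_inf (T Ts : {linear M -> M}) : hs_adjoint T Ts ->
  opnorm (@schatten1 R N) T = opnorm (@schattenInf R N) Ts.
Proof.
move=> adjT; apply: opnorm_eq.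
- exact: schatten1_0 N_gt0.
- by move=> X /schatten1_schattenInf_gt0[].
- exact: schattenInf_0 N_gt0.
- by move=> X /schatten1_schattenInf_gt0[].
move=> m; split; first exact: bounded_by_adjoint_1_inf.
exact: bounded_by_adjoint_inf_1 (hs_adjoint_sym adjT).
Qed.

Lemma opnorm_adjoint_2 (T Ts : {linear M -> M}) : hs_adjoint T Ts ->
  opnorm (@schatten2 R N) T = opnorm (@schatten2 R N) Ts.
Proof.
move=> adjT; apply: opnorm_eq; try exact: schatten2_0 N_gt0; try exact: schatten2_gt0.
move=> m; split; first exact: bounded_by_adjoint_2.
exact: bounded_by_adjoint_2 (hs_adjoint_sym adjT).
Qed.

End OperatorNorms.

Theorem proposition4p2 (R : realType) (N : nat) (hN : (1 <= N)%N)
    (T Ts : {linear 'M[R[i]]_N -> 'M[R[i]]_N})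
    (hT : exists X : 'M[R[i]]_N, T X != 0)
    (hTs : hs_adjoint T Ts) :
  height T = height Ts.
Proof.
rewrite /height (opnorm_adjoint_1_inf hN hTs).
rewrite -(opnorm_adjoint_1_inf hN (hs_adjoint_sym hTs)) (opnorm_adjoint_2 hN hTs).
by rewrite [X in Num.sqrt X]mulrC.
Qed.
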